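(* Let $p$ be a prime, let $U$ be an open subgroup of $S$, and let $H\neq\{t\}$ be a closed normal subgroup of $U$. Then $H$ is infinite, and $H$ contains elements of arbitrarily large depth: for every $N\ge1$ there is $h\in H$ with $h\neq t$ and $h\equiv t\pmod{t^N}$.
   Context: $S$ denotes the group, under substitution $(f\circ g)(t)=f(g(t))$, of all power series $t+\sum_{k\ge1}(a_{pk}t^{pk}+a_{pk+1}t^{pk+1})$ with coefficients in $\mathbb F_p$; it is a pro-$p$ group with the topology in which the subgroups $\{f\in S: f\equiv t\bmod t^n\}$ form a base of open neighbourhoods of the identity $t$. *)

From HB Require Import structures.
From mathcomp Require Import all_boot all_order all_algebra.
From Stdlib Require List.
Set Implicit Arguments. Unset Strict Implicit. Unset Printing Implicit Defensive.
Import GRing.Theory.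
Local Open Scope ring_scope.

(* formal power series with coefficients in 'F_p : n |-> coefficient of t^n *)
Definition ser (p : nat) := nat -> 'F_p.

Definition tser (p : nat) : ser p := fun n => if n == 1%N then 1 else 0.

Definition trunc (p : nat) (g : ser p) (n : nat) : {poly 'F_p} :=
  \poly_(i < n.+1) g i.

(* substitution (f o g)(t) = f(g(t)), for g with zero constant term:
   the n-th coefficient is [t^n] sum_{k<=n} f_k g(t)^k *)
Definition comp (p : nat) (f g : ser p) : ser p :=
  fun n => (\sum_(k < n.+1) f k *: (trunc g n) ^+ k)`_n.

(* the group S: t + sum_{k>=1} (a_{pk} t^{pk} + a_{pk+1} t^{pk+1}) *)
Definition inS (p : nat) (f : ser p) : Prop :=
  f 0%N = 0 /\ f 1%N = 1 /\
  (forall n, (2 <= n)%N -> (n %% p != 0)%N -> (n %% p != 1)%N -> f n = 0).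

Definition congr_mod (p : nat) (n : nat) (f g : ser p) : Prop :=
  forall i, (i < n)%N -> f i = g i.

Definition Kn (p : nat) (n : nat) (f : ser p) : Prop :=
  inS f /\ congr_mod n f (tser p).

Definition subgroupS (p : nat) (U : ser p -> Prop) : Prop :=
  (forall f, U f -> inS f) /\ U (tser p) /\
  (forall f g, U f -> U g -> U (comp f g)) /\
  (forall f g, U f -> inS g -> comp f g = tser p -> U g).

Definition open_subgroupS (p : nat) (U : ser p -> Prop) : Prop :=
  subgroupS U /\ exists n, forall f, Kn n f -> U f.

(* closed subset of S: every f in S all of whose neighbourhoods f o K_n
   meet H lies in H *)
Definition closedS (p : nat) (H : ser p -> Prop) : Prop :=
  forall f, inS f ->
    (forall n, exists k, Kn n k /\ H (comp f k)) -> H f.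

Definition normal_subgroupS (p : nat) (H U : ser p -> Prop) : Prop :=
  subgroupS H /\ (forall h, H h -> U h) /\
  (forall u v h, U u -> U v -> comp u v = tser p -> H h -> H (comp (comp u h) v)).

Definition finite_setS (p : nat) (H : ser p -> Prop) : Prop :=
  exists l : seq (ser p), forall h, H h -> List.In h l.

(* Let h <> t lie in H and let m be its depth: h = t mod t^m and h_m <> 0. As h lies
   in S, m = 0 or 1 mod p. Pick r large with r = 0 or 1 mod p but r <> m mod p; then
   k = t + t^r lies in S and in U, and the commutator k h k^-1 h^-1 lies in H and is
   t mod t^r. It is not t: for f, g of depths m, r, the coefficient of t^(m+r-1) in
   f(g(t)) is f_(m+r-1) + g_(m+r-1) + m f_m g_r, so k and h commute only if m = r in
   F_p. Hence H has elements of arbitrarily large depth, which no finite set has.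
   That S is a group comes from Frobenius: F_p[t^p] is stable under substitution,
   hence so is F_p[t^p] + t F_p[t^p], and inverses, computed coefficient by
   coefficient, stay in S. *)

From Pilot Require Import Defs.
From mathcomp Require Import all_boot all_order all_algebra.
From mathcomp Require Import zify ring.
From Stdlib Require Import FunctionalExtensionality Classical_Prop.
Set Implicit Arguments. Unset Strict Implicit. Unset Printing Implicit Defensive.
Import GRing.Theory.
Local Open Scope ring_scope.

(* A bare [comp] would be ssrfun's function composition. *)
Local Notation scomp := Defs.comp.

Section PolyModX.
Variable R : nzSemiRingType.
Implicit Types (A B C D P Q : {poly R}).

Definition eqmodX n A B := forall i, (i < n)%N -> A`_i = B`_i.

Lemma eqmodX_trans n A B C : eqmodX n A B -> eqmodX n B C -> eqmodX n A C.
Proof. by move=> eAB eBC i lt_in; rewrite eAB // eBC. Qed.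

Lemma eqmodXD n A B C D :
  eqmodX n A B -> eqmodX n C D -> eqmodX n (A + C) (B + D).
Proof. by move=> eAB eCD i lt_in; rewrite !coefD eAB // eCD. Qed.

Lemma eqmodXM n A B C D :
  eqmodX n A B -> eqmodX n C D -> eqmodX n (A * C) (B * D).
Proof.
move=> eAB eCD i lt_in; rewrite !coefM; apply: eq_bigr => [[j /= le_ji]] _.
by rewrite eAB ?eCD //; apply: leq_ltn_trans lt_in; rewrite ?leq_subr // -ltnS.
Qed.

Lemma eqmodXX n A B k : eqmodX n A B -> eqmodX n (A ^+ k) (B ^+ k).
Proof.
move=> eAB; elim: k => [|k IHk]; first by move=> i; rewrite !expr0.
by rewrite !exprS; apply: eqmodXM.
Qed.

Lemma coef_expr_lt Q k i : Q`_0 = 0 -> (i < k)%N -> (Q ^+ k)`_i = 0.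
Proof.
move=> Q0; elim: k i => // k IHk i lt_ik.
rewrite exprS coefM big1 // => -[[|j] lt_ji] _ /=; first by rewrite Q0 mul0r.
by rewrite IHk ?mulr0 //; move: lt_ik lt_ji; rewrite !ltnS; lia.
Qed.

Lemma coef_comp_poly_lt P Q n i : Q`_0 = 0 -> (i < n)%N ->
  (P \Po Q)`_i = \sum_(k < n) P`_k * (Q ^+ k)`_i.
Proof.
move=> Q0 lt_in; rewrite coef_comp_poly.
rewrite (big_ord_widen (size P + n) (fun k => P`_k * (Q ^+ k)`_i)) ?leq_addr //.
rewrite (big_ord_widen (size P + n) (fun k => P`_k * (Q ^+ k)`_i) (leq_addl _ _)).
rewrite big_mkcond [RHS]big_mkcond; apply: eq_bigr => k _.
case: ltnP => lt_kP; case: ltnP => lt_kn //.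
  by rewrite coef_expr_lt ?mulr0 // (leq_trans lt_in).
by rewrite nth_default ?mul0r.
Qed.

Lemma coef0_comp_poly P Q : Q`_0 = 0 -> (P \Po Q)`_0 = P`_0.
Proof. by move=> Q0; rewrite (coef_comp_poly_lt P Q0 (ltn0Sn 0)) big_ord1 coef1 mulr1. Qed.

Lemma eqmodX_comp n P P' Q Q' : Q`_0 = 0 -> Q'`_0 = 0 ->
  eqmodX n P P' -> eqmodX n Q Q' -> eqmodX n (P \Po Q) (P' \Po Q').
Proof.
move=> Q0 Q'0 eP eQ i lt_in.
rewrite (coef_comp_poly_lt P Q0 lt_in) (coef_comp_poly_lt P' Q'0 lt_in).
by apply: eq_bigr => k _; rewrite eP // (eqmodXX k eQ).
Qed.

End PolyModX.

Section ComPolyModX.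
Variable R : comNzRingType.
Implicit Types (E G P Q B C : {poly R}).

Lemma eqmodX_exprD_sqr0 n G E k : eqmodX n (E * E) 0 ->
  eqmodX n ((G + E) ^+ k.+1) (G ^+ k.+1 + k.+1%:R * E * G ^+ k).
Proof.
move=> E2; elim: k => [|k IHk]; first by move=> i _; rewrite !expr1 expr0 mulr1 mul1r.
rewrite exprSr; apply: (eqmodX_trans (eqmodXM IHk (fun i _ => erefl))).
have -> : (G ^+ k.+1 + k.+1%:R * E * G ^+ k) * (G + E) =
    (G ^+ k.+2 + k.+2%:R * E * G ^+ k.+1) + k.+1%:R * G ^+ k * (E * E).
  by rewrite !exprS -[k.+2]addn1 -[k.+1]addn1 !natrD; ring.
rewrite -[X in eqmodX _ _ X]addr0; apply: eqmodXD => // i lt_in.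
rewrite coef0 coefM big1 // => -[j /= le_ji] _.
by rewrite E2 ?coef0 ?mulr0 // (leq_ltn_trans (leq_subr _ _) lt_in).
Qed.

Lemma eqmodX_sqr_Xn n C : (0 < n)%N -> eqmodX n.+1 ('X^n * C * ('X^n * C)) 0.
Proof.
move=> n_gt0 i lt_in; rewrite coef0 -mulrA coefXnM.
case: (ltnP i n) => // le_ni.
have -> : i = n by lia.
by rewrite subnn mulrCA coefXnM n_gt0.
Qed.

Lemma coef_comp_poly_addXn F G c n : (0 < n)%N -> G`_0 = 0 ->
  (F \Po (G + c *: 'X^n))`_n = (F \Po G)`_n + c * F`_1.
Proof.
move=> n_gt0 G0.
have E2 : eqmodX n.+1 (c *: 'X^n * (c *: 'X^n)) 0.
  move=> i lt_in; rewrite -scalerAl -scalerAr !coefZ -exprD coefXn coef0.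
  by rewrite (_ : (i == n + n)%N = false) ?mulr0 //; lia.
have GE0 : (G + c *: 'X^n)`_0 = 0.
  by rewrite coefD coefZ coefXn G0 eq_sym (negbTE (lt0n_neq0 n_gt0)) mulr0 addr0.
have coefX_n k : ((G + c *: 'X^n) ^+ k)`_n = (G ^+ k)`_n + (k == 1%N)%:R * c.
  case: k => [|k]; first by rewrite mul0r addr0.
  rewrite (eqmodX_exprD_sqr0 G k E2) // coefD -mulrA mulr_natl coefMn.
  rewrite -scalerAl coefZ coefXnM ltnn subnn.
  case: k => [|k]; first by rewrite expr0 coef1 mulr1 mul1r.
  by rewrite [(G ^+ k.+1)`_0]coef_expr_lt // mulr0 mul0rn /= mul0r.
rewrite (coef_comp_poly_lt F GE0 (ltnSn n)) (coef_comp_poly_lt F G0 (ltnSn n)).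
under eq_bigr => k _ do rewrite coefX_n mulrDr.
rewrite big_split /=; congr (_ + _).
case: n n_gt0 {E2 GE0 coefX_n} => // n _.
rewrite 2!big_ord_recl big1 => [|i _]; last by rewrite mul0r mulr0.
by rewrite mul0r mulr0 add0r addr0 mul1r mulrC.
Qed.

Lemma coef_comp_poly_XaddXn a b B C : (0 < a)%N -> (0 < b)%N ->
  (('X + 'X^(a.+1) * B) \Po ('X + 'X^(b.+1) * C))`_(a + b).+1%N =
  ('X + 'X^(a.+1) * B)`_(a + b).+1%N + ('X + 'X^(b.+1) * C)`_(a + b).+1%N
    + a.+1%:R * B`_0 * C`_0.
Proof.
move=> a_gt0 b_gt0; set H : {poly R} := 'X + 'X^(b.+1) * C.
have H0 : H`_0 = 0 by rewrite coefD coefX coefXnM add0r.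
have eH : eqmodX b.+1 H 'X.
  by move=> i lt_ib; rewrite coefD coefXnM lt_ib addr0.
have eHa : eqmodX b.+1 ((1 + 'X^b * C) ^+ a.+1) (1 + a.+1%:R * ('X^b * C)).
  apply: eqmodX_trans (eqmodX_exprD_sqr0 1 a (eqmodX_sqr_Xn C b_gt0)) _.
  by move=> i _; rewrite !expr1n mulr1.
have eBH : eqmodX b.+1 (B \Po H) B.
  by rewrite -[X in eqmodX _ _ X]comp_polyXr; apply: eqmodX_comp; rewrite ?coefX.
have key : (('X^(a.+1) * B) \Po H)`_(a + b).+1 = B`_b + a.+1%:R * B`_0 * C`_0.
  rewrite comp_polyM comp_Xn_poly.
  rewrite {1}(_ : H = 'X * (1 + 'X^b * C)); last by rewrite mulrDr mulr1 mulrA -exprS.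
  rewrite exprMn -[_ * (B \Po H)]mulrA coefXnM (_ : (a + b).+1 < a.+1 = false)%N; last by lia.
  rewrite (_ : ((a + b).+1 - a.+1 = b)%N); last by lia.
  rewrite (eqmodXM eHa eBH (ltnSn b)) mulrDl mul1r coefD -!mulrA mulr_natl coefMn.
  by rewrite coefXnM ltnn subnn coef0M mulr_natl [C`_0 * _]mulrC.
rewrite comp_polyD comp_polyX [LHS]coefD key [in RHS]coefD.
rewrite coefX (_ : (a + b).+1 == 1 = false)%N; last by lia.
rewrite coefXnM (_ : (a + b).+1 < a.+1 = false)%N; last by lia.
rewrite (_ : ((a + b).+1 - a.+1 = b)%N); last by lia.
by rewrite add0r addrCA addrA.
Qed.

End ComPolyModX.

Section Series.
Variable p : nat.
Implicit Types (f g h : ser p) (F G : {poly 'F_p}).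

Lemma coef_trunc f n i : (trunc f n)`_i = if (i <= n)%N then f i else 0.
Proof. by rewrite coef_poly ltnS. Qed.

Lemma coefX_tser i : ('X : {poly 'F_p})`_i = tser p i.
Proof. by rewrite coefX /tser; case: eqP. Qed.

Lemma scompE f g n : scomp f g n = (trunc f n \Po trunc g n)`_n.
Proof.
rewrite /Defs.comp; apply: (congr1 (fun P : {poly _} => P`_n)).
rewrite [trunc f n]/trunc poly_def.
rewrite (big_morph (fun P => P \Po trunc g n) (fun P Q => comp_polyD P Q _) (comp_poly0 _)).
by apply: eq_bigr => k _; rewrite comp_polyZ comp_Xn_poly.
Qed.

Lemma scompP f g n F G : g 0%N = 0 -> G`_0 = 0 ->
  (forall i, (i <= n)%N -> F`_i = f i) -> (forall i, (i <= n)%N -> G`_i = g i) ->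
  scomp f g n = (F \Po G)`_n.
Proof.
move=> g0 G0 eF eG; rewrite scompE; apply: eqmodX_comp (ltnSn n) => //.
- by rewrite coef_trunc.
- by move=> i lt_in; rewrite coef_trunc -ltnS lt_in eF.
- by move=> i lt_in; rewrite coef_trunc -ltnS lt_in eG.
Qed.

Lemma scomp0 f g : g 0%N = 0 -> scomp f g 0 = f 0%N.
Proof. by move=> g0; rewrite scompE coef0_comp_poly !coef_trunc. Qed.

Lemma trunc_scomp f g n : g 0%N = 0 ->
  eqmodX n.+1 (trunc (scomp f g) n) (trunc f n \Po trunc g n).
Proof.
move=> g0 i; rewrite ltnS => le_in; rewrite coef_trunc le_in.
apply: scompP; rewrite ?coef_trunc // => j le_ji;
  by rewrite coef_trunc (leq_trans le_ji le_in).
Qed.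

Lemma scompA f g h : g 0%N = 0 -> h 0%N = 0 -> scomp (scomp f g) h = scomp f (scomp g h).
Proof.
move=> g0 h0; apply: functional_extensionality => n; rewrite !scompE.
have h0n : (trunc h n)`_0 = 0 by rewrite coef_trunc.
have g0n : (trunc g n)`_0 = 0 by rewrite coef_trunc.
rewrite (eqmodX_comp h0n h0n (trunc_scomp f g0) (fun _ _ => erefl) (ltnSn n)).
rewrite -comp_polyA; symmetry.
apply: (eqmodX_comp _ _ (fun _ _ => erefl) (trunc_scomp g h0)) (ltnSn n).
- by rewrite coef_trunc scomp0.
- by rewrite coef0_comp_poly.
Qed.

Lemma scompX g : g 0%N = 0 -> scomp (tser p) g = g.
Proof.
move=> g0; apply: functional_extensionality => n.
rewrite (scompP (F := 'X) (G := trunc g n)) ?comp_polyX ?coef_trunc ?leqnn //.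
- by move=> i _; rewrite coefX_tser.
- by move=> i le_in; rewrite coef_trunc le_in.
Qed.

Lemma scompXr f : scomp f (tser p) = f.
Proof.
apply: functional_extensionality => n.
rewrite (scompP (F := trunc f n) (G := 'X)) ?comp_polyXr ?coef_trunc ?leqnn ?coefX //.
- by move=> i le_in; rewrite coef_trunc le_in.
- by move=> i _; rewrite coefX_tser.
Qed.

Lemma scomp_congr N f f' g g' :
  congr_mod N f f' -> congr_mod N g g' -> congr_mod N (scomp f g) (scomp f' g').
Proof.
move=> ef eg n lt_nN; have trunc_eq h h' : congr_mod N h h' -> trunc h n = trunc h' n.
  move=> eh; apply/polyP => i; rewrite !coef_trunc; case: ifP => // le_in.
  exact/eh/(leq_ltn_trans le_in lt_nN).
by rewrite !scompE (trunc_eq _ _ ef) (trunc_eq _ _ eg).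
Qed.

End Series.

Section Inverse.
Variable p : nat.
Implicit Types (f : ser p).

(* [inv_trunc f n] truncates the inverse of [f] below degree [n]; the new coefficient
   is chosen so that [f] composed with it agrees with [t] at degree [n]
   (see coef_comp_poly_addXn). *)
Fixpoint inv_trunc f n : {poly 'F_p} :=
  if n is n'.+1 then
    let G := inv_trunc f n' in G + (tser p n' - (trunc f n' \Po G)`_n') *: 'X^n'
  else 0.

Lemma inv_truncS f n : inv_trunc f n.+1 =
  inv_trunc f n + (tser p n - (trunc f n \Po inv_trunc f n)`_n) *: 'X^n.
Proof. by []. Qed.

Definition sinv f : ser p := fun n => (inv_trunc f n.+1)`_n.

Lemma coef_inv_trunc f n i :
  (inv_trunc f n)`_i = if (i < n)%N then sinv f i else 0.
Proof.
elim: n i => [|n IHn] i; first by rewrite coef0.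
rewrite inv_truncS coefD coefZ coefXn IHn ltnS.
case: (ltngtP i n) => [_|_|->] /=; rewrite ?mulr0 ?addr0 //.
by rewrite /sinv inv_truncS coefD coefZ coefXn IHn ltnn eqxx.
Qed.

Lemma trunc_sinv f n : trunc (sinv f) n = inv_trunc f n.+1.
Proof. by apply/polyP => i; rewrite coef_trunc coef_inv_trunc ltnS. Qed.

Lemma sinv0 f : f 0%N = 0 -> sinv f 0 = 0.
Proof.
move=> f0; rewrite /sinv /= coefD coef0 add0r coefZ coefXn mulr1 comp_poly0r coefC.
by rewrite coef_trunc f0 subr0.
Qed.

Lemma coef0_inv_trunc f n : f 0%N = 0 -> (inv_trunc f n)`_0 = 0.
Proof. by move=> f0; rewrite coef_inv_trunc sinv0 // if_same. Qed.

Lemma sinv1 f : f 0%N = 0 -> sinv f 1 = 1.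
Proof.
move=> f0; have G1 : inv_trunc f 1 = 0.
  by apply/polyP => -[|i]; rewrite coef_inv_trunc coef0 ?sinv0.
rewrite /sinv inv_truncS G1.
by rewrite coefD coef0 add0r coefZ coefXn mulr1 comp_poly0r coefC subr0.
Qed.

Lemma scomp_sinv f : f 0%N = 0 -> f 1%N = 1 -> scomp f (sinv f) = tser p.
Proof.
move=> f0 f1; apply: functional_extensionality => -[|n].
  by rewrite scomp0 ?sinv0.
rewrite scompE trunc_sinv inv_truncS coef_comp_poly_addXn ?coef0_inv_trunc //.
by rewrite coef_trunc f1 mulr1 addrC subrK.
Qed.

End Inverse.

Section SubstitutionGroup.
Variable p : nat.
Hypothesis p_pr : prime p.
Implicit Types (f g : ser p) (A B P Q : {poly 'F_p}).

Let p_gt1 : (1 < p)%N. Proof. exact: prime_gt1. Qed.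

Definition Xp_poly P := forall i, ~~ (p %| i)%N -> P`_i = 0.

Definition S_poly P :=
  forall i, (2 <= i)%N -> (i %% p != 0)%N -> (i %% p != 1)%N -> P`_i = 0.

Lemma Xp_polyC c : Xp_poly c%:P.
Proof. by move=> [|i] ndvd; [rewrite dvdn0 in ndvd | rewrite coefC]. Qed.

Lemma Xp_poly0 : Xp_poly 0.
Proof. by move=> i _; rewrite coef0. Qed.

Lemma Xp_polyD A B : Xp_poly A -> Xp_poly B -> Xp_poly (A + B).
Proof. by move=> XpA XpB i ndvd; rewrite coefD XpA // XpB // addr0. Qed.

Lemma Xp_polyZ c A : Xp_poly A -> Xp_poly (c *: A).
Proof. by move=> XpA i ndvd; rewrite coefZ XpA // mulr0. Qed.

Lemma Xp_polyM A B : Xp_poly A -> Xp_poly B -> Xp_poly (A * B).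
Proof.
move=> XpA XpB i ndvd; rewrite coefM big1 // => -[j /= le_ji] _.
have [dvd_j|ndvd_j] := boolP (p %| j)%N; last by rewrite XpA // mul0r.
rewrite XpB ?mulr0 //; apply: contra ndvd => dvd_ij.
by rewrite -(subnK (_ : j <= i)%N) ?dvdn_add // -ltnS.
Qed.

Lemma Xp_polyX A k : Xp_poly A -> Xp_poly (A ^+ k).
Proof.
move=> XpA; elim: k => [|k IHk]; first by rewrite expr0 -polyC1; apply: Xp_polyC.
by rewrite exprS; apply: Xp_polyM.
Qed.

Lemma Xp_poly_expp A : Xp_poly (A ^+ p).
Proof.
have pchar_p : p \in [pchar {poly 'F_p}] by rewrite (pchar_poly _ p) pchar_Fp.
elim/poly_ind: A => [|A c IHA].
  by rewrite expr0n (gtn_eqF (prime_gt0 p_pr)); apply: Xp_poly0.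
rewrite -!(pFrobenius_autE pchar_p) rmorphD rmorphM /= !pFrobenius_autE.
rewrite -polyC_exp; apply/Xp_polyD/Xp_polyC/Xp_polyM => // i ndvd.
by rewrite coefXn; case: eqP ndvd => // ->; rewrite dvdnn.
Qed.

Lemma Xp_poly_comp A Q : Xp_poly A -> Xp_poly (A \Po Q).
Proof.
move=> XpA; rewrite comp_polyE.
apply: (big_ind Xp_poly) => [||k _]; [exact: Xp_poly0 | exact: Xp_polyD |].
have [dvd_k|ndvd_k] := boolP (p %| k)%N; last by rewrite XpA // scale0r; apply: Xp_poly0.
by apply: Xp_polyZ; rewrite -(divnK dvd_k) mulnC exprM; apply/Xp_polyX/Xp_poly_expp.
Qed.

Lemma modS_eq1 i : (i.+1 %% p == 1)%N = (p %| i)%N.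
Proof.
rewrite -[X in (_ == X)%N](modn_small p_gt1) -(addn1 i).
by rewrite -[X in (_ == X %% _)%N](add0n 1%N) eqn_modDr mod0n eq_sym.
Qed.

Lemma S_polyP P :
  S_poly P <-> exists A B, [/\ Xp_poly A, Xp_poly B & P = A + 'X * B].
Proof.
split=> [SP|[A [B [XpA XpB ->]]]]; last first.
  move=> [|[|i]] // _ ndvd0 ndvd1; rewrite coefD coefXM /= XpA // XpB ?addr0 //.
  by rewrite -modS_eq1.
exists (\poly_(i < size P) (if (p %| i)%N then P`_i else 0)),
       (\poly_(i < size P) (if (p %| i)%N then P`_i.+1 else 0)).
split; try by move=> i ndvd; rewrite coef_poly (negbTE ndvd) if_same.
apply/polyP => -[|i]; rewrite coefD coefXM !coef_poly /=.
  by rewrite dvdn0 addr0; case: ltnP => // le_P0; rewrite nth_default.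
have [lt_iP|le_Pi] := ltnP i.+1 (size P); last by rewrite nth_default // !if_same add0r.
rewrite ltnW //; case dvd_i1: (p %| i.+1)%N; case dvd_i: (p %| i)%N.
- by move: dvd_i1; rewrite -addn1 dvdn_addr // dvdn1 gtn_eqF.
- by rewrite addr0.
- by rewrite add0r.
rewrite addr0 SP //; last by rewrite modS_eq1 dvd_i.
- by case: i dvd_i {lt_iP dvd_i1} => //; rewrite dvdn0.
- exact: negbT dvd_i1.
Qed.

Lemma S_poly_comp P Q : S_poly P -> S_poly Q -> S_poly (P \Po Q).
Proof.
move=> /S_polyP[A [B [XpA XpB ->]]] SQ; have /S_polyP[C [D [XpC XpD eQ]]] := SQ.
rewrite comp_polyD comp_polyM comp_polyX.
apply/S_polyP; exists (A \Po Q + C * (B \Po Q)), (D * (B \Po Q)); split.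
- by apply: Xp_polyD; [apply: Xp_poly_comp | apply: Xp_polyM => //; apply: Xp_poly_comp].
- by apply: Xp_polyM => //; apply: Xp_poly_comp.
- by rewrite [X in X * (B \Po Q)]eQ mulrDl -addrA -mulrA.
Qed.

Lemma S_poly_trunc f n : inS f -> S_poly (trunc f n).
Proof. by move=> [_ [_ Sf]] i i_ge2 ndvd0 ndvd1; rewrite coef_trunc Sf ?if_same. Qed.

Lemma S_poly_inv_trunc f n : inS f -> S_poly (inv_trunc f n).
Proof.
move=> Sf; elim: n => [|n IHn] i i_ge2 ndvd0 ndvd1; first by rewrite coef0.
rewrite inv_truncS coefD coefZ coefXn IHn // add0r.
case: eqP => [ein|_]; last by rewrite mulr0.
subst i; rewrite /tser (gtn_eqF i_ge2) S_poly_comp ?subr0 ?mul0r //.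
exact: S_poly_trunc.
Qed.

Lemma inS_sinv f : inS f -> inS (sinv f).
Proof.
move=> Sf; have [f0 _] := Sf; split; [exact: sinv0 | split; first exact: sinv1].
by move=> n n_ge2 ndvd0 ndvd1; apply: (S_poly_inv_trunc n.+1 Sf).
Qed.

Lemma sinv_scomp f : inS f -> scomp (sinv f) f = tser p.
Proof.
move=> Sf; have [f0 [f1 _]] := Sf; have [g0 [g1 _]] := inS_sinv Sf.
have sinvK : sinv (sinv f) = f.
  rewrite -[LHS]scompX ?sinv0 // -(scomp_sinv f0 f1) scompA ?sinv0 //.
  by rewrite scomp_sinv // scompXr.
by rewrite -[X in scomp _ X]sinvK scomp_sinv.
Qed.

End SubstitutionGroup.

Section Depth.
Variable p : nat.
Implicit Types (f g h k : ser p).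

Lemma depth_polyP f a n : (0 < a)%N -> congr_mod a.+1 f (tser p) ->
  exists B : {poly 'F_p},
    B`_0 = f a.+1 /\ forall i, (i <= n)%N -> ('X + 'X^(a.+1) * B)`_i = f i.
Proof.
move=> a_gt0 f_t; exists (\poly_(i < n.+1) f (i + a.+1)%N); split=> [|i le_in].
  by rewrite coef_poly.
rewrite coefD coefX_tser coefXnM coef_poly; case: ltnP => [lt_ia|le_ai].
  by rewrite addr0 f_t.
rewrite subnK // (_ : i - a.+1 < n.+1)%N; last by lia.
by rewrite /tser (_ : i == 1 = false)%N ?add0r //; lia.
Qed.

Lemma scomp_depth f g a b : (0 < a)%N -> (0 < b)%N ->
  congr_mod a.+1 f (tser p) -> congr_mod b.+1 g (tser p) ->
  scomp f g (a + b).+1%N = f (a + b).+1%N + g (a + b).+1%N + a.+1%:R * f a.+1 * g b.+1.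
Proof.
move=> a_gt0 b_gt0 f_t g_t.
have [B [B0 eF]] := depth_polyP (a + b).+1%N a_gt0 f_t.
have [C [C0 eG]] := depth_polyP (a + b).+1%N b_gt0 g_t.
have g0 : g 0%N = 0 by rewrite g_t.
by rewrite (scompP g0 _ eF eG) ?coef_comp_poly_XaddXn ?eF ?eG ?B0 ?C0.
Qed.

Lemma depth_eq_of_commute f g a b : (0 < a)%N -> (0 < b)%N ->
  congr_mod a.+1 f (tser p) -> congr_mod b.+1 g (tser p) ->
  f a.+1 != 0 -> g b.+1 != 0 -> scomp f g = scomp g f ->
  a.+1%:R = b.+1%:R :> 'F_p.
Proof.
move=> a_gt0 b_gt0 f_t g_t fa_neq0 gb_neq0 /(congr1 (fun e => e (a + b).+1%N)).
rewrite scomp_depth // addnC scomp_depth // addnC [g _ + _]addrC => /addrI.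
by rewrite -!mulrA [g _ * _]mulrC => /(mulIf (mulf_neq0 fa_neq0 gb_neq0)).
Qed.

Lemma exists_depth f : f <> tser p -> exists m, congr_mod m f (tser p) /\ f m != tser p m.
Proof.
move=> f_neq; have ex_ne : exists i, f i != tser p i.
  apply: NNPP => no_ne; apply/f_neq/functional_extensionality => i.
  by apply/eqP/negPn/negP => ne_i; apply: no_ne; exists i.
case: (ex_minnP ex_ne) => m ne_m min_m; exists m; split=> // i lt_im.
by apply/eqP/negPn/negP => /min_m; rewrite leqNgt lt_im.
Qed.

Lemma inS_depth h : inS h -> h <> tser p ->
  exists2 a, (0 < a)%N & [/\ congr_mod a.+1 h (tser p), h a.+1 != 0
                           & (a.+1 %% p == 0)%N || (a.+1 %% p == 1)%N].
Proof.
move=> [h0 [h1 h_S]] h_neq; have [m [h_t hm_neq]] := exists_depth h_neq.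
case: m h_t hm_neq => [|[|a]] h_t; rewrite /tser /= ?h0 ?h1 ?eqxx // => ha_neq0.
exists a.+1 => //; split=> //.
by apply/negPn/negP; rewrite negb_or => /andP[nd0 nd1]; move: ha_neq0; rewrite h_S.
Qed.

Definition tplus r : ser p := fun n => tser p n + (n == r)%:R.

Lemma tplus_congr r : congr_mod r (tplus r) (tser p).
Proof. by move=> i lt_ir; rewrite /tplus ltn_eqF // addr0. Qed.

Lemma tplus_eq1 r : (1 < r)%N -> tplus r r = 1.
Proof. by move=> r_gt1; rewrite /tplus /tser gtn_eqF // eqxx add0r. Qed.

Lemma inS_tplus r : (1 < r)%N -> (r %% p == 0)%N || (r %% p == 1)%N -> inS (tplus r).
Proof.
move=> r_gt1 r_p; rewrite /inS /tplus /tser /=.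
split; first by rewrite eq_sym (gtn_eqF (ltnW r_gt1)) add0r.
split; first by rewrite eq_sym (gtn_eqF r_gt1) addr0.
move=> n n_ge2 ndvd0 ndvd1; rewrite (gtn_eqF n_ge2) add0r.
have [n_r|//] := eqVneq n r.
by move: r_p; rewrite -n_r (negbTE ndvd0) (negbTE ndvd1).
Qed.

End Depth.

Section Commutator.
Variable p : nat.
Hypothesis p_pr : prime p.
Implicit Types (f h k : ser p) (U H : ser p -> Prop).

Lemma congr_modW M N f h : congr_mod N f h -> (M <= N)%N -> congr_mod M f h.
Proof. by move=> e le_MN i lt_iM; apply/e/(leq_trans lt_iM). Qed.

Definition scomm k h := scomp (scomp (scomp k h) (sinv k)) (sinv h).

Lemma scomm_congr N k h : inS k -> inS h ->
  congr_mod N k (tser p) -> congr_mod N (scomm k h) (tser p).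
Proof.
move=> Sk Sh k_t; have [k0 [k1 _]] := Sk; have [h0 [h1 _]] := Sh.
have Sk' := inS_sinv p_pr Sk; have [k'0 _] := Sk'.
have kh_h : congr_mod N (scomp k h) h by rewrite -{2}(scompX h0); apply: scomp_congr.
have hk_h : congr_mod N (scomp h k) h by rewrite -{2}(scompXr h); apply: scomp_congr.
have -> : tser p = scomp (scomp (scomp h k) (sinv k)) (sinv h).
  by rewrite [scomp (scomp h k) _]scompA // scomp_sinv // scompXr scomp_sinv.
apply: scomp_congr => //; apply: scomp_congr => // i lt_iN.
by rewrite kh_h // hk_h.
Qed.

Lemma scomm_eq_tser k h : inS k -> inS h -> scomm k h = tser p -> scomp k h = scomp h k.
Proof.
move=> Sk Sh; have [k0 [k1 _]] := Sk; have [h0 [h1 _]] := Sh.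
have [k'0 _] := inS_sinv p_pr Sk; have [h'0 _] := inS_sinv p_pr Sh.
rewrite /scomm; set x := scomp (scomp k h) (sinv k) => x_h'.
have x0 : x 0%N = 0 by rewrite /x !scomp0.
have x_h : x = h by rewrite -[x]scompXr -(sinv_scomp p_pr Sh) -scompA // x_h' scompX.
by rewrite -[scomp k h]scompXr -(sinv_scomp p_pr Sk) -scompA -/x ?x_h // scomp0.
Qed.

Lemma scomm_in U H k h : subgroupS U -> normal_subgroupS H U -> U k -> H h -> H (scomm k h).
Proof.
move=> [US [_ [_ Uinv]]] [[HS [_ [Hcomp Hinv]]] [_ Hnorm]] Uk Hh.
have Sk := US k Uk; have [k0 [k1 _]] := Sk; have Sh := HS h Hh; have [h0 [h1 _]] := Sh.
have kk' := scomp_sinv k0 k1; have hh' := scomp_sinv h0 h1.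
have Uk' : U (sinv k) := Uinv k _ Uk (inS_sinv p_pr Sk) kk'.
have Hh' : H (sinv h) := Hinv h _ Hh (inS_sinv p_pr Sh) hh'.
exact: Hcomp (Hnorm _ _ _ Uk Uk' kk' Hh) Hh'.
Qed.

Lemma exists_S_exponent_neq m L : (m %% p == 0)%N || (m %% p == 1)%N ->
  exists r, [/\ (L <= r)%N, (r %% p == 0)%N || (r %% p == 1)%N & r%:R != m%:R :> 'F_p].
Proof.
have p_gt1 := prime_gt1 p_pr.
have modp (e : bool) : ((L * p + e) %% p = e)%N by rewrite modnMDl modn_small //; case: e; lia.
move=> m_p; exists (L * p + (m %% p == 0%N))%N; split.
- exact: leq_trans (leq_pmulr L (ltnW p_gt1)) (leq_addr _ _).
- by rewrite modp; case: (m %% p == 0)%N.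
rewrite -(Fp_nat_mod p_pr m) -(Fp_nat_mod p_pr (_ + _)%N) modp.
by case/orP: m_p => /eqP->; rewrite ?oner_neq0 // eq_sym oner_neq0.
Qed.

End Commutator.

Lemma exists_deep_element p (U H : ser p -> Prop) h N : prime p ->
  open_subgroupS U -> normal_subgroupS H U -> H h -> h <> tser p ->
  exists h', H h' /\ h' <> tser p /\ congr_mod N h' (tser p).
Proof.
move=> p_pr [U_sub [n0 U_open]] H_normal Hh h_neq.
have Sh : inS h by case: H_normal => -[HS _] _; apply: HS.
have [a a_gt0 [h_t ha_neq0 a_p]] := inS_depth Sh h_neq.
have [r [le_r r_p r_neq]] := exists_S_exponent_neq p_pr (N + n0 + 2) a_p.
have [b r_b] : exists b, r = b.+1 by exists r.-1; rewrite prednK //; lia.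
subst r; have b_gt0 : (0 < b)%N by lia.
set k := tplus p b.+1; have k_t : congr_mod b.+1 k (tser p) := @tplus_congr p b.+1.
have Sk : inS k by apply: inS_tplus.
have Uk : U k by apply: U_open; split=> //; apply: (congr_modW k_t); lia.
exists (scomm k h); split; first exact: scomm_in U_sub H_normal Uk Hh.
split; last by apply: (congr_modW (scomm_congr p_pr Sk Sh k_t)); lia.
move=> /(scomm_eq_tser p_pr Sk Sh) comm.
have kb_neq0 : k b.+1 != 0 by rewrite /k tplus_eq1 ?oner_neq0.
by move: r_neq; rewrite (depth_eq_of_commute b_gt0 a_gt0 k_t h_t kb_neq0 ha_neq0 comm) eqxx.
Qed.

Lemma finite_depth_bound p (l : seq (ser p)) :
  exists N, forall g, List.In g l -> g <> tser p -> ~ congr_mod N g (tser p).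
Proof.
elim: l => [|g l [N IHl]]; first by exists 0%N.
have [->|g_neq] := classic (g = tser p); first by exists N => g' [<-|/IHl].
have [m [_ gm_neq]] := exists_depth g_neq.
exists (maxn N m.+1) => g' [<-|l_g'] g'_neq g'_t.
  by move: gm_neq; rewrite g'_t ?eqxx // leq_max ltnSn orbT.
by apply: (IHl g' l_g' g'_neq); apply: (congr_modW g'_t); apply: leq_maxl.
Qed.

Theorem proposition5p6 (p : nat) (U H : ser p -> Prop) :
  prime p ->
  open_subgroupS U ->
  closedS H ->
  normal_subgroupS H U ->
  (exists h, H h /\ h <> tser p) ->
  ~ finite_setS H /\
  (forall N, (1 <= N)%N -> exists h, H h /\ h <> tser p /\ congr_mod N h (tser p)).
Proof.
move=> p_pr U_open _ H_normal [h [Hh h_neq]].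
have deep N := exists_deep_element N p_pr U_open H_normal Hh h_neq.
split=> [[l H_l]|N _]; last exact: deep.
have [N not_deep] := finite_depth_bound l.
have [g [Hg [g_neq g_deep]]] := deep N.
exact: not_deep g (H_l g Hg) g_neq g_deep.
Qed.
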